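(* For $n=0,1,2,\dots$ let $\alpha_n=1/(n+1)!$, let $\beta_0=0$, $\beta_{n+1}=\sum_{k=0}^{n}\frac{1}{k!(k+2)!}$, and $\beta=\lim_{n\to\infty}\beta_n$. Define $f:\mathbb{R}\to\mathbb{R}$ by $f(x)=x$ if $x>1$; $f(x)=\alpha_{n+1}x+\beta_{n+1}$ if $\alpha_{n+1}<x\le\alpha_n$ ($n=0,1,2,\dots$); $f(0)=\beta$; and $f(x)=f(-x)$ if $x<0$. Then $f$ is continuous and convex with global minimizer $\bar x=0$, and $$T_{\operatorname{gph}\partial_p f}(0,0)=\{(w,z)\mid 0\le z\le w\}\cup\{(w,z)\mid 0\ge z\ge w\}.$$ Consequently, for each $w\in\operatorname{dom}D(\partial_p f)(0|0)$ with $|w|=1$ there is $z\in D(\partial_p f)(0|0)(w)$ with $zw\ge1$ (the sufficient condition of the second kind holds with $\kappa=1$), yet there exist $w\neq0$ and $z\in D(\partial f)(0|0)(w)$ with $zw=0$, and $0$ is not a strong local minimizer of $f$ (the quadratic growth condition fails at $0$).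
   Context: The proximal subdifferential is $\partial_p f(\bar x)=\{v\mid \liminf_{x\to\bar x}\frac{f(x)-f(\bar x)-\langle v,x-\bar x\rangle}{\|x-\bar x\|^2}>-\infty\}$; for convex $f$ it coincides with the convex and limiting subdifferential $\partial f$. The tangent cone is $T_\Omega(\bar u)=\{v\mid \exists t_k\downarrow0,\ v_k\to v,\ \bar u+t_kv_k\in\Omega\}$, and $DF(\bar x|\bar y)(w)=\{z\mid (w,z)\in T_{\operatorname{gph}F}(\bar x,\bar y)\}$. $\bar x$ is a strong local minimizer if there are $\kappa,\gamma>0$ with $f(x)-f(\bar x)\ge\frac\kappa2|x-\bar x|^2$ for $|x-\bar x|\le\gamma$. *)

From Stdlib Require Import Reals Lra Lia Arith Factorial Classical ClassicalEpsilon.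
Open Scope R_scope.

Definition alpha (n : nat) : R := / INR (fact (S n)).

Definition beta (n : nat) : R :=
  match n with
  | O => 0
  | S m => sum_f_R0 (fun k => / (INR (fact k) * INR (fact (k + 2)))) m
  end.

Definition piece_index (x : R) : nat :=
  epsilon (inhabits O) (fun n => alpha (S n) < x <= alpha n).

(* f on [0, +oo), with the value b = lim beta_n at 0. *)
Definition f_nonneg (b : R) (x : R) : R :=
  if Rlt_dec 1 x then x
  else if Req_EM_T x 0 then b
  else alpha (S (piece_index x)) * x + beta (S (piece_index x)).

Definition fex (b : R) (x : R) : R := f_nonneg b (Rabs x).

Definition convex_fun (f : R -> R) : Prop :=
  forall x y t, 0 <= t <= 1 ->
    f (t * x + (1 - t) * y) <= t * f x + (1 - t) * f y.

(* Proximal subdifferential: liminf_{x -> xb} (f x - f xb - v (x - xb)) / |x - xb|^2 > -oo,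
   i.e. the quotient is bounded below on a punctured neighbourhood of xb. *)
Definition prox_subdiff (f : R -> R) (xb v : R) : Prop :=
  exists M delta, 0 < delta /\
    forall x, 0 < Rabs (x - xb) < delta ->
      (f x - f xb - v * (x - xb)) / (Rabs (x - xb)) ^ 2 >= M.

Definition conv_subdiff (f : R -> R) (xb v : R) : Prop :=
  forall x, f xb + v * (x - xb) <= f x.

Definition tangent_cone (Omega : R * R -> Prop) (u v : R * R) : Prop :=
  exists (t : nat -> R) (vk : nat -> R * R),
    (forall k, 0 < t k) /\ Un_cv t 0 /\
    Un_cv (fun k => fst (vk k)) (fst v) /\ Un_cv (fun k => snd (vk k)) (snd v) /\
    (forall k, Omega (fst u + t k * fst (vk k), snd u + t k * snd (vk k))).

Definition gph (F : R -> R -> Prop) (p : R * R) : Prop := F (fst p) (snd p).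

Definition graph_deriv (F : R -> R -> Prop) (xb yb w z : R) : Prop :=
  tangent_cone (gph F) (xb, yb) (w, z).

Definition strong_local_min (f : R -> R) (xb : R) : Prop :=
  exists kappa gamma, 0 < kappa /\ 0 < gamma /\
    forall x, Rabs (x - xb) <= gamma -> f x - f xb >= kappa / 2 * (Rabs (x - xb)) ^ 2.

From Stdlib Require Import Reals Lra Lia Arith Factorial ClassicalEpsilon.
Open Scope R_scope.

(* The function f = fex b is the even extension of a piecewise affine function
   on [0, +oo): on (alpha (n+1), alpha n] it coincides with the affine piece
   [piece n] of slope alpha (n+1), two consecutive pieces meet exactly at the
   kink alpha (n+1), and every piece lies below f.  Hence:
   - every x has a convex subgradient s lying between 0 and x with |s| <= 1
     (the slope of a supporting piece, of the identity, or the constant b);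
     convexity, 1-Lipschitz continuity and minimality of 0 follow at once;
   - for such a function every proximal subgradient v at x lies between 0
     and x, so the graph of the proximal subdifferential lies in the closed
     cone S = {(w,z) | z between 0 and w}, hence so does its tangent cone;
   - conversely at each kink alpha (n+1) every slope between the two adjacent
     slopes alpha (n+2) = alpha (n+1)/(n+3) and alpha (n+1) is a subgradient,
     and since alpha (n+1) -> 0 these kinks realise every ray of S;
   - f (alpha n) - f 0 <= alpha n ^ 2 / (n+2), so quadratic growth fails. *)

Lemma cv_const (c : R) : Un_cv (fun _ => c) c.
Proof.
  intros e He. exists 0%nat. intros n _. unfold R_dist.
  rewrite Rminus_diag, Rabs_R0. lra.
Qed.

Lemma cv_of_inv_bound (u : nat -> R) (l : R) :
  (forall n, Rabs (u n - l) <= / (INR n + 1)) -> Un_cv u l.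
Proof.
  intros Hu e He. destruct (RinvN_cv He) as [N HN]. exists N. intros n Hn.
  specialize (HN n Hn). unfold R_dist, Rdist in *. simpl in HN.
  rewrite Rminus_0_r, Rabs_right in HN by (apply Rle_ge, Rlt_le, RinvN_pos).
  specialize (Hu n). lra.
Qed.

Lemma le_of_le_plus_small (c d K delta : R) : 0 < delta ->
  (forall e, 0 < e < delta -> c <= d + K * e) -> c <= d.
Proof.
  intros Hdelta H. apply Rle_plus_epsilon. intros eps Heps.
  pose proof (Rabs_pos K) as HK.
  set (e := Rmin (delta / 2) (eps / (Rabs K + 1))).
  assert (He : 0 < e) by (apply Rmin_glb_lt; apply Rdiv_lt_0_compat; lra).
  assert (He_delta : e < delta).
  { pose proof (Rmin_l (delta / 2) (eps / (Rabs K + 1))) as Hl. fold e in Hl. lra. }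
  assert (He_eps : (Rabs K + 1) * e <= eps).
  { pose proof (Rmin_r (delta / 2) (eps / (Rabs K + 1))) as Hr. fold e in Hr.
    apply Rmult_le_compat_l with (r := Rabs K + 1) in Hr; [|lra].
    unfold Rdiv in Hr. rewrite (Rmult_comm eps), <- Rmult_assoc, Rinv_r, Rmult_1_l in Hr; lra. }
  assert (K * e <= Rabs K * e) by (apply Rmult_le_compat_r; [lra | apply Rle_abs]).
  specialize (H e (conj He He_delta)). nra.
Qed.

Lemma peak_is_max (g : nat -> R) (p : nat) :
  (forall m, (m < p)%nat -> g m <= g (S m)) ->
  (forall m, (p <= m)%nat -> g (S m) <= g m) ->
  forall m, g m <= g p.
Proof.
  intros Hup Hdown.
  assert (Before : forall k m, (m + k)%nat = p -> g m <= g p).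
  { induction k as [|k IH]; intros m Hm.
    - replace m with p by lia. lra.
    - apply Rle_trans with (g (S m)); [apply Hup; lia | apply IH; lia]. }
  assert (After : forall k, g (p + k)%nat <= g p).
  { induction k as [|k IH].
    - rewrite Nat.add_0_r. lra.
    - rewrite Nat.add_succ_r. apply Rle_trans with (g (p + k)%nat); [apply Hdown; lia | exact IH]. }
  intro m. destruct (le_lt_dec m p) as [Hm|Hm].
  - apply (Before (p - m)%nat). lia.
  - replace m with (p + (m - p))%nat by lia. apply After.
Qed.

(** * The sequences alpha and beta *)

Lemma alpha_pos (n : nat) : 0 < alpha n.
Proof. unfold alpha. apply Rinv_0_lt_compat, INR_fact_lt_0. Qed.

Lemma alpha_0 : alpha 0 = 1.
Proof. unfold alpha. simpl. lra. Qed.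

Lemma alpha_succ (n : nat) : alpha (S n) = alpha n / (INR n + 2).
Proof.
  unfold alpha. rewrite (fact_simpl (S n)), mult_INR.
  replace (INR (S (S n))) with (INR n + 2) by (rewrite !S_INR; ring).
  pose proof (INR_fact_lt_0 (S n)). pose proof (pos_INR n).
  field. lra.
Qed.

Lemma alpha_succ_lt (n : nat) : alpha (S n) < alpha n.
Proof.
  rewrite alpha_succ. pose proof (alpha_pos n). pose proof (pos_INR n).
  apply Rmult_lt_reg_r with (INR n + 2); [lra|].
  unfold Rdiv. rewrite Rmult_assoc, Rinv_l by lra. nra.
Qed.

Lemma alpha_le (m n : nat) : (m <= n)%nat -> alpha n <= alpha m.
Proof. induction 1 as [|n _ IH]; [lra | pose proof (alpha_succ_lt n); lra]. Qed.

Lemma alpha_le_1 (n : nat) : alpha n <= 1.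
Proof. rewrite <- alpha_0. apply alpha_le. lia. Qed.

Lemma alpha_le_inv (n : nat) : alpha n <= / (INR n + 1).
Proof.
  unfold alpha. assert (H : (S n <= fact (S n))%nat).
  { rewrite fact_simpl. pose proof (lt_O_fact n). nia. }
  apply le_INR in H. rewrite S_INR in H. pose proof (pos_INR n).
  apply Rinv_le_contravar; lra.
Qed.

Lemma alpha_succ_cv : Un_cv (fun k => alpha (S k)) 0.
Proof.
  apply cv_of_inv_bound. intro n. rewrite Rminus_0_r.
  pose proof (alpha_pos (S n)). rewrite Rabs_right by lra.
  pose proof (alpha_le_inv (S n)). rewrite S_INR in *. pose proof (pos_INR n).
  eapply Rle_trans; [eassumption | apply Rinv_le_contravar; lra].
Qed.

Lemma alpha_eventually_below (x : R) : 0 < x -> exists N, alpha N <= x.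
Proof.
  intro Hx. destruct (INR_unbounded (/ x)) as [N HN]. exists N.
  pose proof (alpha_le_inv N). pose proof (Rinv_0_lt_compat x Hx).
  assert (/ (INR N + 1) <= x); [|lra].
  rewrite <- (Rinv_inv x). apply Rinv_le_contravar; lra.
Qed.

(* The increment of beta: it makes consecutive pieces meet at alpha (S n). *)
Lemma beta_increment (n : nat) :
  beta (S (S n)) - beta (S n) = (alpha (S n) - alpha (S (S n))) * alpha (S n).
Proof.
  unfold beta. rewrite tech5. cbv beta.
  replace (S n + 2)%nat with (S (S (S n))) by lia.
  rewrite (alpha_succ (S n)). unfold alpha.
  rewrite (fact_simpl (S (S n))), (fact_simpl (S n)), !mult_INR, !S_INR.
  pose proof (INR_fact_lt_0 (S n)). pose proof (pos_INR n).
  field. lra.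
Qed.

Lemma beta_growing : Un_growing beta.
Proof.
  intros [|n].
  - unfold beta. simpl. lra.
  - pose proof (beta_increment n). pose proof (alpha_succ_lt (S n)).
    pose proof (alpha_pos (S n)). nra.
Qed.

(** * The affine pieces *)

(* On (alpha (S n), alpha n] the function f is the affine map [piece n]. *)
Definition piece (n : nat) (x : R) : R := alpha (S n) * x + beta (S n).

Lemma piece_0 (x : R) : piece 0 x = x / 2 + / 2.
Proof. unfold piece, alpha, beta. simpl. lra. Qed.

Lemma piece_difference (n : nat) (x : R) :
  piece n x - piece (S n) x = (alpha (S n) - alpha (S (S n))) * (x - alpha (S n)).
Proof. unfold piece. pose proof (beta_increment n). nra. Qed.

Lemma piece_max (p : nat) (x : R) : alpha (S p) <= x <= alpha p ->
  forall m, piece m x <= piece p x.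
Proof.
  intros [Hlo Hhi]. apply (peak_is_max (fun m => piece m x)).
  - intros m Hm. pose proof (piece_difference m x). pose proof (alpha_succ_lt (S m)).
    pose proof (alpha_le (S m) p Hm). nra.
  - intros m Hm. pose proof (piece_difference m x). pose proof (alpha_succ_lt (S m)).
    assert (alpha (S m) <= alpha (S p)) by (apply alpha_le; lia). nra.
Qed.

(* All pieces lie below 1 at x = 1; in particular beta is bounded. *)
Lemma piece_at_1 (n : nat) : alpha (S n) + beta (S n) <= 1.
Proof.
  pose proof (alpha_succ_lt 0) as Halpha1. rewrite alpha_0 in Halpha1.
  pose proof (piece_max 0 1 ltac:(rewrite alpha_0; lra) n) as Hmax.
  rewrite piece_0 in Hmax. unfold piece in Hmax. lra.
Qed.

Lemma beta_converges : exists b, Un_cv beta b.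
Proof.
  destruct (growing_cv beta beta_growing) as [b Hb].
  - exists 1. intros x [[|i] ->]; unfold beta at 1; [lra|].
    pose proof (piece_at_1 i). pose proof (alpha_pos (S i)). unfold beta in *. lra.
  - exists b. exact Hb.
Qed.

Lemma piece_exists (x : R) : 0 < x <= 1 -> exists n, alpha (S n) < x <= alpha n.
Proof.
  intros Hx. destruct (alpha_eventually_below (x / 2)) as [N HN]; [lra|].
  assert (HaN : alpha (S N) < x) by (pose proof (alpha_le N (S N) (Nat.le_succ_diag_r N)); lra).
  clear HN. induction N as [|N IH].
  - exists 0%nat. rewrite alpha_0. lra.
  - destruct (Rle_dec x (alpha (S N))); [exists (S N); lra | apply IH; lra].
Qed.

Lemma piece_index_spec (x : R) : 0 < x <= 1 ->
  alpha (S (piece_index x)) < x <= alpha (piece_index x).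
Proof.
  intro Hx. unfold piece_index.
  apply (epsilon_spec (inhabits O) (fun n => alpha (S n) < x <= alpha n)).
  now apply piece_exists.
Qed.

Lemma piece_index_alpha (n : nat) : piece_index (alpha n) = n.
Proof.
  pose proof (piece_index_spec (alpha n) (conj (alpha_pos n) (alpha_le_1 n))) as [H1 H2].
  set (p := piece_index (alpha n)) in *.
  destruct (lt_eq_lt_dec p n) as [[Hlt|Heq]|Hgt]; auto.
  - pose proof (alpha_le (S p) n Hlt). lra.
  - pose proof (alpha_le (S n) p Hgt). pose proof (alpha_succ_lt n). lra.
Qed.

Lemma f_nonneg_gt_1 (b x : R) : 1 < x -> f_nonneg b x = x.
Proof. intro H. unfold f_nonneg. destruct (Rlt_dec 1 x); [auto | lra]. Qed.

Lemma f_nonneg_0 (b : R) : f_nonneg b 0 = b.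
Proof.
  unfold f_nonneg. destruct (Rlt_dec 1 0); [lra|].
  destruct (Req_EM_T 0 0); [auto | lra].
Qed.

Lemma f_nonneg_mid (b x : R) : 0 < x <= 1 -> f_nonneg b x = piece (piece_index x) x.
Proof.
  intro H. unfold f_nonneg. destruct (Rlt_dec 1 x); [lra|].
  destruct (Req_EM_T x 0); [lra | reflexivity].
Qed.

Lemma f_nonneg_alpha (b : R) (n : nat) : f_nonneg b (alpha n) = piece n (alpha n).
Proof.
  rewrite f_nonneg_mid by (split; [apply alpha_pos | apply alpha_le_1]).
  now rewrite piece_index_alpha.
Qed.

(** * Convex subgradients of a real function *)

Lemma convex_of_subgradients (g : R -> R) :
  (forall x, exists s, conv_subdiff g x s) -> convex_fun g.
Proof.
  intros Hg x y t Ht. set (z := t * x + (1 - t) * y).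
  destruct (Hg z) as [s Hs]. pose proof (Hs x). pose proof (Hs y).
  assert (t * (s * (x - z)) + (1 - t) * (s * (y - z)) = 0) by (unfold z; ring).
  nra.
Qed.

Lemma lipschitz_of_subgradients (g : R -> R) :
  (forall x, exists s, Rabs s <= 1 /\ conv_subdiff g x s) ->
  forall x y, Rabs (g x - g y) <= Rabs (x - y).
Proof.
  intros Hg x y.
  destruct (Hg x) as [s [Hs Hsx]]. destruct (Hg y) as [r [Hr Hry]].
  pose proof (Hsx y). pose proof (Hry x).
  pose proof (Rle_abs s). pose proof (Rle_abs (- s)).
  pose proof (Rle_abs r). pose proof (Rle_abs (- r)). rewrite !Rabs_Ropp in *.
  destruct (Rle_dec x y).
  - rewrite Rabs_minus_sym, (Rabs_minus_sym x), (Rabs_right (y - x)) by lra.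
    apply Rabs_le. nra.
  - rewrite (Rabs_right (x - y)) by lra. apply Rabs_le. nra.
Qed.

Lemma continuity_of_lipschitz (g : R -> R) :
  (forall x y, Rabs (g x - g y) <= Rabs (x - y)) -> continuity g.
Proof.
  intros Hg x e He. exists e. split; [exact He|].
  intros y [_ Hy]. simpl in *. unfold R_dist in *. pose proof (Hg y x). lra.
Qed.

Lemma conv_subdiff_even (g : R -> R) (x v : R) : (forall y, g (- y) = g y) ->
  conv_subdiff g x v -> conv_subdiff g (- x) (- v).
Proof.
  intros Heven H y. specialize (H (- y)). rewrite Heven in H.
  unfold conv_subdiff. rewrite Heven. lra.
Qed.

Lemma conv_subdiff_between (g : R -> R) (x s1 s2 v : R) :
  conv_subdiff g x s1 -> conv_subdiff g x s2 -> s1 <= v <= s2 -> conv_subdiff g x v.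
Proof.
  intros H1 H2 Hv y. specialize (H1 y). specialize (H2 y).
  destruct (Rle_dec x y); nra.
Qed.

Lemma conv_subdiff_prox (g : R -> R) (x v : R) : conv_subdiff g x v -> prox_subdiff g x v.
Proof.
  intro H. exists 0, 1. split; [lra|]. intros y Hy. specialize (H y).
  unfold Rdiv. apply Rle_ge, Rmult_le_pos; [lra|].
  apply Rlt_le, Rinv_0_lt_compat, pow_lt. lra.
Qed.

(** * The cone S = {(w, z) | z lies between 0 and w} *)

Definition sandwiched (w z : R) : Prop := (0 <= z /\ z <= w) \/ (0 >= z /\ z >= w).

Lemma sandwiched_iff_minmax (w z : R) : sandwiched w z <-> Rmin 0 w <= z <= Rmax 0 w.
Proof. unfold sandwiched, Rmin, Rmax. destruct (Rle_dec 0 w); lra. Qed.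

Lemma sandwiched_iff_product (w z : R) : sandwiched w z <-> 0 <= z * (w - z).
Proof.
  unfold sandwiched. split; [intros [[]|[]]; nra|].
  intro H. destruct (Rle_dec 0 w); [left | right];
    split; apply Rnot_lt_le || apply Rle_ge, Rnot_lt_le; intro; nra.
Qed.

Lemma sandwiched_0 (z : R) : sandwiched 0 z -> z = 0.
Proof. unfold sandwiched. lra. Qed.

Lemma sandwiched_ratio (w z : R) : w <> 0 -> sandwiched w z -> 0 <= z / w <= 1.
Proof.
  intros Hw Hs. assert (Hi : w * / w = 1) by (field; auto). unfold Rdiv.
  destruct (Rle_dec 0 w).
  - pose proof (Rinv_0_lt_compat w ltac:(lra)). unfold sandwiched in Hs. split; nra.
  - pose proof (Rinv_lt_0_compat w ltac:(lra)). unfold sandwiched in Hs. split; nra.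
Qed.

Lemma sandwiched_unscale (t w z : R) : 0 < t -> sandwiched (t * w) (t * z) -> sandwiched w z.
Proof.
  intros Ht. rewrite !sandwiched_iff_product. intro H.
  replace (t * z * (t * w - t * z)) with ((t * t) * (z * (w - z))) in H by ring.
  destruct (Rle_dec 0 (z * (w - z))); [auto|]. pose proof (Rmult_lt_0_compat t t Ht Ht). nra.
Qed.

Lemma sandwiched_closed (a c : nat -> R) (w z : R) :
  Un_cv a w -> Un_cv c z -> (forall k, sandwiched (a k) (c k)) -> sandwiched w z.
Proof.
  intros Ha Hc Hk. apply sandwiched_iff_product.
  apply (Rle_cv_lim (Un := fun _ => 0) (Vn := fun k => c k * (a k - c k))).
  - intro k. apply sandwiched_iff_product, Hk.
  - apply cv_const.
  - apply CV_mult; [exact Hc | apply CV_minus; assumption].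
Qed.

(** * Proximal subgradients of a function with sandwiched subgradients *)

Lemma prox_subdiff_quadratic (g : R -> R) (x v : R) : prox_subdiff g x v ->
  exists M delta, 0 < delta /\
    forall h, 0 < Rabs h < delta -> M * h ^ 2 <= g (x + h) - g x - v * h.
Proof.
  intros [M [delta [Hdelta H]]]. exists M, delta. split; [exact Hdelta|].
  intros h Hh. specialize (H (x + h)). replace (x + h - x) with h in H by ring.
  specialize (H Hh). rewrite pow2_abs in H.
  assert (Hh2 : 0 < h ^ 2) by (rewrite <- pow2_abs; apply pow_lt; lra).
  apply Rge_le in H. apply Rmult_le_compat_r with (r := h ^ 2) in H; [|lra].
  unfold Rdiv in H. rewrite Rmult_assoc, Rinv_l, Rmult_1_r in H; lra.
Qed.

(* If every point x has a convex subgradient between 0 and x, then so does every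
   proximal subgradient: compare the quadratic lower bound with the subgradient
   inequality at x + e and at x - e and let e -> 0. *)
Lemma prox_subdiff_sandwiched (g : R -> R) :
  (forall y, exists s, sandwiched y s /\ conv_subdiff g y s) ->
  forall x v, prox_subdiff g x v -> sandwiched x v.
Proof.
  intros Hg x v Hv. destruct (prox_subdiff_quadratic g x v Hv) as [M [delta [Hdelta HM]]].
  assert (Slope : forall h, 0 < Rabs h < delta -> exists s,
             sandwiched (x + h) s /\ M * h ^ 2 <= (s - v) * h).
  { intros h Hh. destruct (Hg (x + h)) as [s [Hs Hsub]]. exists s. split; [exact Hs|].
    specialize (Hsub x). specialize (HM h Hh). nra. }
  apply sandwiched_iff_minmax. split.
  - apply (le_of_le_plus_small (Rmin 0 x) v (1 - M) delta Hdelta). intros e He.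
    destruct (Slope (- e)) as [s [Hs Hq]]; [rewrite Rabs_Ropp, Rabs_right; lra|].
    apply sandwiched_iff_minmax in Hs.
    assert (Rmin 0 x - e <= Rmin 0 (x + - e)) by (unfold Rmin; destruct Rle_dec, Rle_dec; lra).
    assert (M * e <= v - s) by (apply Rmult_le_reg_r with e; nra). lra.
  - apply (le_of_le_plus_small v (Rmax 0 x) (1 - M) delta Hdelta). intros e He.
    destruct (Slope e) as [s [Hs Hq]]; [rewrite Rabs_right; lra|].
    apply sandwiched_iff_minmax in Hs.
    assert (Rmax 0 (x + e) <= Rmax 0 x + e) by (unfold Rmax; destruct Rle_dec, Rle_dec; lra).
    assert (M * e <= s - v) by (apply Rmult_le_reg_r with e; nra). lra.
Qed.

(** * Tangent cones at the origin *)

Lemma tangent_cone_mono (Omega Omega' : R * R -> Prop) (u p : R * R) :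
  (forall q, Omega q -> Omega' q) -> tangent_cone Omega u p -> tangent_cone Omega' u p.
Proof.
  intros H [t [vk [Ht [Ht0 [H1 [H2 H3]]]]]]. exists t, vk. repeat split; auto.
Qed.

Lemma tangent_cone_zero (Omega : R * R -> Prop) (u : R * R) :
  Omega u -> tangent_cone Omega u (0, 0).
Proof.
  intro Hu. exists (fun k => / (INR k + 1)), (fun _ => (0, 0)). simpl.
  repeat split.
  - intro k. pose proof (pos_INR k). apply Rinv_0_lt_compat. lra.
  - apply cv_of_inv_bound. intro n. rewrite Rminus_0_r, Rabs_right; [lra|].
    pose proof (pos_INR n). apply Rle_ge, Rlt_le, Rinv_0_lt_compat. lra.
  - apply cv_const.
  - apply cv_const.
  - intro k. rewrite !Rmult_0_r, !Rplus_0_r. destruct u. exact Hu.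
Qed.

Lemma tangent_cone_sandwiched (F : R -> R -> Prop) (w z : R) :
  (forall x v, F x v -> sandwiched x v) ->
  tangent_cone (gph F) (0, 0) (w, z) -> sandwiched w z.
Proof.
  intros HF [t [vk [Ht [_ [H1 [H2 H3]]]]]]. simpl in *.
  apply (sandwiched_closed _ _ _ _ H1 H2). intro k.
  apply (sandwiched_unscale (t k)); [apply Ht|].
  specialize (H3 k). unfold gph in H3. simpl in H3. rewrite !Rplus_0_l in H3.
  exact (HF _ _ H3).
Qed.

Lemma slope_sequence (r : R) : 0 <= r <= 1 ->
  exists m : nat -> R, Un_cv m r /\ forall k, / (INR k + 3) <= m k <= 1.
Proof.
  intro Hr. exists (fun k => Rmax r (/ (INR k + 3))). split.
  - apply cv_of_inv_bound. intro k. pose proof (pos_INR k).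
    assert (/ (INR k + 3) <= / (INR k + 1)) by (apply Rinv_le_contravar; lra).
    assert (0 < / (INR k + 3)) by (apply Rinv_0_lt_compat; lra).
    unfold Rmax. destruct (Rle_dec r (/ (INR k + 3))).
    + rewrite Rabs_right; lra.
    + rewrite Rminus_diag, Rabs_R0. lra.
  - intro k. split; [apply Rmax_r|]. apply Rmax_lub; [lra|].
    pose proof (pos_INR k). rewrite <- Rinv_1. apply Rinv_le_contravar; lra.
Qed.

(** * The function f = fex b, where b = lim beta *)

Section TheFunction.

Variable b : R.
Hypothesis b_limit : Un_cv beta b.

Lemma beta_le_b (n : nat) : beta n <= b.
Proof. exact (growing_ineq beta b beta_growing b_limit n). Qed.

Lemma fex_even (y : R) : fex b (- y) = fex b y.
Proof. unfold fex. now rewrite Rabs_Ropp. Qed.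

Lemma piece_below (n : nat) (u : R) : 0 <= u -> piece n u <= f_nonneg b u.
Proof.
  intro Hu. destruct (Rlt_dec 1 u).
  - rewrite f_nonneg_gt_1 by auto. pose proof (piece_at_1 n).
    pose proof (alpha_le_1 (S n)). unfold piece. nra.
  - destruct (Req_EM_T u 0) as [->|].
    + rewrite f_nonneg_0. unfold piece. rewrite Rmult_0_r, Rplus_0_l. apply beta_le_b.
    + rewrite f_nonneg_mid by lra. apply piece_max.
      pose proof (piece_index_spec u ltac:(lra)). lra.
Qed.

Lemma identity_below (u : R) : 0 <= u -> u <= f_nonneg b u.
Proof.
  intro Hu. destruct (Rlt_dec 1 u).
  - rewrite f_nonneg_gt_1 by auto. lra.
  - pose proof (piece_below 0 u Hu). rewrite piece_0 in *. lra.
Qed.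

Lemma b_below (u : R) : 0 <= u -> b <= f_nonneg b u.
Proof.
  intro Hu. apply (Rle_cv_lim (Un := beta) (Vn := fun _ => f_nonneg b u)).
  - intros [|n].
    + unfold beta. pose proof (identity_below u Hu). lra.
    + pose proof (piece_below n u Hu). pose proof (alpha_pos (S n)). unfold piece in *. nra.
  - exact b_limit.
  - apply cv_const.
Qed.

Lemma supporting_line_subgradient (s c x : R) : 0 <= s -> 0 <= x ->
  (forall u, 0 <= u -> s * u + c <= f_nonneg b u) -> s * x + c = f_nonneg b x ->
  conv_subdiff (fex b) x s.
Proof.
  intros Hs Hx Hbelow Htouch y. unfold fex. rewrite (Rabs_right x) by lra.
  pose proof (Hbelow (Rabs y) (Rabs_pos y)). pose proof (Rle_abs y). nra.
Qed.

Lemma nonneg_subgradient (x : R) : 0 <= x ->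
  exists s, 0 <= s <= x /\ s <= 1 /\ conv_subdiff (fex b) x s.
Proof.
  intro Hx. destruct (Rlt_dec 1 x).
  - exists 1. repeat split; try lra.
    apply (supporting_line_subgradient 1 0); try lra.
    + intros u Hu. pose proof (identity_below u Hu). lra.
    + rewrite f_nonneg_gt_1; lra.
  - destruct (Req_EM_T x 0) as [->|].
    + exists 0. repeat split; try lra.
      apply (supporting_line_subgradient 0 b); try lra.
      * intros u Hu. pose proof (b_below u Hu). lra.
      * rewrite f_nonneg_0. lra.
    + set (p := piece_index x). pose proof (piece_index_spec x ltac:(lra)) as Hp.
      fold p in Hp. pose proof (alpha_pos (S p)). pose proof (alpha_le_1 (S p)).
      exists (alpha (S p)). repeat split; try lra.
      apply (supporting_line_subgradient _ (beta (S p))); try lra.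
      * exact (piece_below p).
      * rewrite f_nonneg_mid by lra. reflexivity.
Qed.

Lemma fex_subgradient (x : R) :
  exists s, sandwiched x s /\ Rabs s <= 1 /\ conv_subdiff (fex b) x s.
Proof.
  destruct (Rle_dec 0 x) as [Hx|Hx].
  - destruct (nonneg_subgradient x Hx) as [s [Hs [Hs1 Hsub]]].
    exists s. unfold sandwiched. rewrite Rabs_right by lra. auto.
  - destruct (nonneg_subgradient (- x) ltac:(lra)) as [s [Hs [Hs1 Hsub]]].
    exists (- s). unfold sandwiched. rewrite Rabs_Ropp, Rabs_right by lra.
    repeat split; try lra. rewrite <- (Ropp_involutive x).
    exact (conv_subdiff_even _ _ _ fex_even Hsub).
Qed.

Lemma fex_convex : convex_fun (fex b).
Proof.
  apply convex_of_subgradients. intro x.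
  destruct (fex_subgradient x) as [s [_ [_ Hs]]]. now exists s.
Qed.

Lemma fex_continuous : continuity (fex b).
Proof.
  apply continuity_of_lipschitz, lipschitz_of_subgradients. intro x.
  destruct (fex_subgradient x) as [s [_ Hs]]. now exists s.
Qed.

Lemma fex_min (x : R) : fex b 0 <= fex b x.
Proof.
  destruct (fex_subgradient 0) as [s [Hs [_ Hsub]]].
  apply sandwiched_0 in Hs. subst s. specialize (Hsub x). lra.
Qed.

Lemma prox_graph_sandwiched (x v : R) : prox_subdiff (fex b) x v -> sandwiched x v.
Proof.
  apply prox_subdiff_sandwiched. intro y.
  destruct (fex_subgradient y) as [s [Hs [_ Hsub]]]. now exists s.
Qed.

(* At the kink alpha (S n) every slope between alpha (S (S n)) and alpha (S n)
   is a subgradient, since both adjacent pieces support f there. *)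
Lemma kink_subgradient (n : nat) (v : R) : alpha (S (S n)) <= v <= alpha (S n) ->
  conv_subdiff (fex b) (alpha (S n)) v.
Proof.
  intro Hv. set (x := alpha (S n)).
  assert (Hx : 0 <= x) by (apply Rlt_le, alpha_pos).
  assert (Hright : f_nonneg b x = piece (S n) x) by apply f_nonneg_alpha.
  assert (Hleft : f_nonneg b x = piece n x) by (pose proof (piece_difference n x); unfold x in *; lra).
  apply (conv_subdiff_between _ _ (alpha (S (S n))) (alpha (S n))); [| |exact Hv].
  - apply (supporting_line_subgradient _ (beta (S (S n)))).
    + apply Rlt_le, alpha_pos.
    + exact Hx.
    + exact (piece_below (S n)).
    + rewrite Hright. reflexivity.
  - apply (supporting_line_subgradient _ (beta (S n))).
    + apply Rlt_le, alpha_pos.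
    + exact Hx.
    + exact (piece_below n).
    + rewrite Hleft. reflexivity.
Qed.

(* The kinks realise every ray of S in the tangent cone to gph (conv_subdiff f). *)
Lemma ray_in_tangent_cone (w z : R) : w <> 0 -> sandwiched w z ->
  tangent_cone (gph (conv_subdiff (fex b))) (0, 0) (w, z).
Proof.
  intros Hw Hs. destruct (slope_sequence (z / w) (sandwiched_ratio w z Hw Hs)) as [m [Hm Hbounds]].
  assert (Hkink : forall k, conv_subdiff (fex b) (alpha (S k)) (alpha (S k) * m k)).
  { intro k. apply kink_subgradient. rewrite (alpha_succ (S k)), S_INR.
    pose proof (alpha_pos (S k)). specialize (Hbounds k).
    replace (INR k + 1 + 2) with (INR k + 3) by ring.
    split; [unfold Rdiv; apply Rmult_le_compat_l|]; nra. }
  pose proof (Rabs_pos_lt w Hw) as Hw_abs.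
  exists (fun k => alpha (S k) * / Rabs w), (fun k => (w, w * m k)). simpl.
  repeat split.
  - intro k. apply Rmult_lt_0_compat; [apply alpha_pos | apply Rinv_0_lt_compat; exact Hw_abs].
  - replace 0 with (0 * / Rabs w) by ring. apply CV_mult; [apply alpha_succ_cv | apply cv_const].
  - apply cv_const.
  - replace z with (w * (z / w)) by (field; auto). apply CV_mult; [apply cv_const | exact Hm].
  - intro k. unfold gph. simpl. destruct (Rle_dec 0 w).
    + rewrite Rabs_right by lra.
      replace (0 + alpha (S k) * / w * w) with (alpha (S k)) by (field; lra).
      replace (0 + alpha (S k) * / w * (w * m k)) with (alpha (S k) * m k) by (field; lra).
      apply Hkink.
    + rewrite Rabs_left by lra.
      replace (0 + alpha (S k) * / - w * w) with (- alpha (S k)) by (field; lra).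
      replace (0 + alpha (S k) * / - w * (w * m k)) with (- (alpha (S k) * m k)) by (field; lra).
      apply conv_subdiff_even; [exact fex_even | apply Hkink].
Qed.

Lemma tangent_cone_prox_graph (w z : R) :
  tangent_cone (gph (prox_subdiff (fex b))) (0, 0) (w, z) <-> sandwiched w z.
Proof.
  split.
  - apply tangent_cone_sandwiched, prox_graph_sandwiched.
  - intro Hs. apply (tangent_cone_mono (gph (conv_subdiff (fex b)))).
    + intros [x v]. apply conv_subdiff_prox.
    + destruct (Req_dec w 0) as [->|Hw].
      * apply sandwiched_0 in Hs. subst z. apply tangent_cone_zero.
        intro y. pose proof (fex_min y). simpl. lra.
      * exact (ray_in_tangent_cone w z Hw Hs).
Qed.

Lemma slow_growth (n : nat) : fex b (alpha n) - fex b 0 <= alpha n ^ 2 / (INR n + 2).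
Proof.
  unfold fex. rewrite Rabs_R0, f_nonneg_0, Rabs_right by (apply Rle_ge, Rlt_le, alpha_pos).
  rewrite f_nonneg_alpha. unfold piece. rewrite alpha_succ.
  pose proof (beta_le_b (S n)). pose proof (pos_INR n).
  replace (alpha n / (INR n + 2) * alpha n) with (alpha n ^ 2 / (INR n + 2)) by (field; lra).
  lra.
Qed.

Lemma not_strong_local_min : ~ strong_local_min (fex b) 0.
Proof.
  intros [kappa [gamma [Hkappa [Hgamma Hgrowth]]]].
  destruct (INR_unbounded (2 / kappa)) as [N HN].
  destruct (alpha_eventually_below gamma Hgamma) as [M HM].
  set (n := (N + M)%nat). set (a := alpha n).
  assert (Ha : 0 < a) by apply alpha_pos.
  assert (Hag : a <= gamma) by (pose proof (alpha_le M n ltac:(unfold n; lia)); unfold a; lra).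
  specialize (Hgrowth a). rewrite Rminus_0_r, Rabs_right in Hgrowth by lra.
  specialize (Hgrowth Hag). pose proof (slow_growth n) as Hslow. fold a in Hslow.
  assert (Hn : 2 / kappa < INR n + 2) by (pose proof (le_INR N n ltac:(unfold n; lia)); lra).
  assert (Hkn : 2 < kappa * (INR n + 2)).
  { apply Rmult_lt_compat_l with (r := kappa) in Hn; [|lra].
    unfold Rdiv in Hn. rewrite <- Rmult_assoc, (Rmult_comm kappa 2), Rmult_assoc,
      Rinv_r, Rmult_1_r in Hn; lra. }
  assert (Hbound : kappa / 2 * a ^ 2 * (INR n + 2) <= a ^ 2).
  { pose proof (pos_INR n). apply Rmult_le_reg_r with (/ (INR n + 2)).
    - apply Rinv_0_lt_compat. lra.
    - rewrite Rmult_assoc, Rinv_r by lra. unfold Rdiv in Hslow. lra. }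
  assert (0 < a ^ 2) by (apply pow_lt; exact Ha). nra.
Qed.

End TheFunction.

Theorem mainTheorem3 :
  (exists b, Un_cv beta b) /\
  forall b, Un_cv beta b ->
    let f := fex b in
    continuity f /\
    convex_fun f /\
    (forall x, f 0 <= f x) /\
    (forall w z, tangent_cone (gph (prox_subdiff f)) (0, 0) (w, z) <->
                 ((0 <= z /\ z <= w) \/ (0 >= z /\ z >= w))) /\
    (forall w, (exists z, graph_deriv (prox_subdiff f) 0 0 w z) -> Rabs w = 1 ->
               exists z, graph_deriv (prox_subdiff f) 0 0 w z /\ z * w >= 1) /\
    (exists w z, w <> 0 /\ graph_deriv (conv_subdiff f) 0 0 w z /\ z * w = 0) /\
    ~ strong_local_min f 0.
Proof.
  split; [exact beta_converges|]. intros b Hb f.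
  split; [exact (fex_continuous b Hb)|].
  split; [exact (fex_convex b Hb)|].
  split; [exact (fex_min b Hb)|].
  split; [exact (tangent_cone_prox_graph b Hb)|].
  split.
  - (* the direction w itself is a graphical derivative, and w * w = 1 *)
    intros w _ Hw. exists w. split.
    + apply (tangent_cone_prox_graph b Hb). unfold sandwiched.
      destruct (Rle_dec 0 w); [left | right]; lra.
    + assert (Hsq : w * w = Rabs w * Rabs w).
      { rewrite <- Rabs_mult, Rabs_right; [lra | apply Rle_ge, Rle_0_sqr]. }
      rewrite Hsq, Hw. lra.
  - split; [|exact (not_strong_local_min b Hb)].
    exists 1, 0. split; [lra|]. split; [|ring].
    apply (ray_in_tangent_cone b Hb). { lra. } unfold sandwiched. lra.
Qed.
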